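(* For every integer $d\ge 3$, the theory $\mathrm{PQM}_d$ is complete: it is consistent, and for every $\mathcal L_d$-sentence $\sigma$, either $\mathrm{PQM}_d\models\sigma$ or $\mathrm{PQM}_d\models\neg\sigma$. Equivalently, any two models of $\mathrm{PQM}_d$ satisfy exactly the same $\mathcal L_d$-sentences.
   Context: Notation. For $d\ge 1$, $\mathbb H_d$ is the set of complex linear subspaces of $\mathbb C^d$, ordered by inclusion $\le$, with $\top=\mathbb C^d$, $\bot=\{0\}$, $p^\bot$ the orthogonal complement, $p\wedge q=p\cap q$ and $p\vee q=p+q$. $\mathbb U_d$ is the set of unitary operators on $\mathbb C^d$, and for $U\in\mathbb U_d$, $p\in\mathbb H_d$, $U(p)=\{Uv: v\in p\}$. The Sasaki projection is $p\,\&\,q := q\cap(q^\bot+p)$. Subspaces $p,q$ are compatible iff $p=(p\wedge q)\vee(p\wedge q^\bot)$. Language $\mathcal L_d$: a first-order language without equality and without constants, having a unary function symbol $u_U$ for each $U\in\mathbb U_d$, a unary function symbol $\pi_q$ for each $q\in\mathbb H_d$, and a unary relation symbol $[\,\cdot:p]$ for each $p\in\mathbb H_d$. Theory $\mathrm{PQM}_d$ (over $\mathcal L_d$) has the following axioms, for all $p,q\in\mathbb H_d$ and $U\in\mathbb U_d$: ($\neg\bot$) $\exists x\,\neg[x:\bot]$; ($\top$) $\forall x\,[x:\top]$; ($\le$) if $p\le q$: $\forall x\,([x:p]\to[x:q])$; ($\wedge$) if $p,q$ are compatible: $\forall x\,([x:p]\wedge[x:q]\to[x:p\wedge q])$; ($\pi_i$)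 $\forall x\,([x:p]\to[\pi_q(x):p\,\&\,q])$; ($\pi_c$) if $p\le q$: $\forall x\,([\pi_p(\pi_q(x)):\bot]\to[\pi_p(x):\bot])$; ($\pi_\bot$) $\forall x\,([\pi_q(x):\bot]\to[x:q^\bot])$; ($u_i$) $\forall x\,([x:p]\to[u_U(x):U(p)])$; ($u_e$) $\forall x\,([u_U(x):p]\to[x:U^{-1}(p)])$. *)

From HB Require Import structures.
From mathcomp Require Import all_boot all_order all_algebra.
From mathcomp Require Import reals.
From mathcomp.real_closed Require Import complex.
Set Implicit Arguments. Unset Strict Implicit. Unset Printing Implicit Defensive.
Import Order.TTheory GRing.Theory Num.Theory.
Local Open Scope ring_scope.

(** Ambient space: column vectors of C^d, where C = R[i] for a real field R
    (any realType is isomorphic to the reals, so R[i] is the complex field). *)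

Section Hilbert.
Variables (R : realType) (d : nat).
Local Notation C := (R[i]).
Local Notation vec := 'cV[C]_d.

Definition adjoint (m n : nat) (A : 'M[C]_(m, n)) : 'M[C]_(n, m) :=
  (map_mx Num.conj A)^T.

(** Standard inner product <u, v> = v^* u (linear in u). *)
Definition dotv (u v : vec) : C := (adjoint v *m u) 0 0.

Definition unitary (U : 'M[C]_d) : bool := U *m adjoint U == 1%:M.

Definition is_subspace (S : vec -> Prop) : Prop :=
  S 0 /\ forall (a : C) (u v : vec), S u -> S v -> S (a *: u + v).

Definition subspace := {S : vec -> Prop | is_subspace S}.
Definition unitaryT := {U : 'M[C]_d | unitary U}.

Definition mem_sub (p : subspace) (v : vec) : Prop := proj1_sig p v.
Definition mat_of (U : unitaryT) : 'M[C]_d := proj1_sig U.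

Lemma bot_sub : is_subspace (fun v => v = 0).
Proof. by split=> // a u v -> ->; rewrite scaler0 addr0. Qed.
Definition sbot : subspace := exist _ _ bot_sub.

Lemma top_sub : is_subspace (fun _ => True).
Proof. by []. Qed.
Definition stop : subspace := exist _ _ top_sub.

Lemma meet_sub (p q : subspace) :
  is_subspace (fun v => mem_sub p v /\ mem_sub q v).
Proof.
case: p q => [P [P0 Pl]] [Q [Q0 Ql]]; rewrite /mem_sub /=.
by split=> // a u v [??] [??]; split; [apply: Pl|apply: Ql].
Qed.
Definition smeet (p q : subspace) : subspace := exist _ _ (meet_sub p q).

Lemma join_sub (p q : subspace) :
  is_subspace (fun w => exists u v, [/\ mem_sub p u, mem_sub q v & w = u + v]).
Proof.
case: p q => [P [P0 Pl]] [Q [Q0 Ql]]; rewrite /mem_sub /=.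
split; first by exists 0, 0; rewrite addr0.
move=> a _ _ [u1 [v1 [Pu1 Qv1 ->]]] [u2 [v2 [Pu2 Qv2 ->]]].
exists (a *: u1 + u2), (a *: v1 + v2); split; [exact: Pl|exact: Ql|].
by rewrite scalerDr addrACA.
Qed.
Definition sjoin (p q : subspace) : subspace := exist _ _ (join_sub p q).

Lemma ortho_sub (p : subspace) :
  is_subspace (fun v => forall w, mem_sub p w -> dotv v w = 0).
Proof.
rewrite /dotv; split=> [w _|a u v Hu Hv w Hw]; first by rewrite mulmx0 mxE.
rewrite mulmxDr -scalemxAr; set A := (_ *m u); set B := (_ *m v).
by rewrite mxE [A]lock mxE -lock [A 0 0]Hu // [B 0 0]Hv // mulr0 addr0.
Qed.
Definition sortho (p : subspace) : subspace := exist _ _ (ortho_sub p).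

Lemma image_sub (M : 'M[C]_d) (p : subspace) :
  is_subspace (fun w => exists2 v, mem_sub p v & w = M *m v).
Proof.
case: p => [P [P0 Pl]]; rewrite /mem_sub /=.
split; first by exists 0; rewrite ?mulmx0.
move=> a _ _ [u Pu ->] [v Pv ->]; exists (a *: u + v); first exact: Pl.
by rewrite mulmxDr scalemxAr.
Qed.
Definition simage (M : 'M[C]_d) (p : subspace) : subspace :=
  exist _ _ (image_sub M p).

Definition sle (p q : subspace) : Prop := forall v, mem_sub p v -> mem_sub q v.
Definition seq_sub (p q : subspace) : Prop := forall v, mem_sub p v <-> mem_sub q v.

Definition sasaki (p q : subspace) : subspace := smeet q (sjoin (sortho q) p).

Definition compatible (p q : subspace) : Prop :=
  seq_sub p (sjoin (smeet p q) (smeet p (sortho q))).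

End Hilbert.

Section Language.
Variables (R : realType) (d : nat).
Local Notation H := (subspace R d).
Local Notation UU := (unitaryT R d).

Inductive term : Type :=
  | TVar : nat -> term
  | Tu : UU -> term -> term
  | Tpi : H -> term -> term.

Inductive formula : Type :=
  | FRel : H -> term -> formula
  | FFalse : formula
  | FNot : formula -> formula
  | FAnd : formula -> formula -> formula
  | FOr : formula -> formula -> formula
  | FImp : formula -> formula -> formula
  | FAll : nat -> formula -> formula
  | FEx : nat -> formula -> formula.

Fixpoint term_var (n : nat) (t : term) : Prop :=
  match t with
  | TVar m => m = n
  | Tu _ t | Tpi _ t => term_var n t
  end.

Fixpoint free_in (n : nat) (f : formula) : Prop :=
  match f with
  | FRel _ t => term_var n t
  | FFalse => False
  | FNot g => free_in n g
  | FAnd g h | FOr g h | FImp g h => free_in n g \/ free_in n h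
  | FAll m g | FEx m g => m <> n /\ free_in n g
  end.

Definition sentence (f : formula) : Prop := forall n, ~ free_in n f.

Record structure := Structure {
  dom :> Type;
  i_u : UU -> dom -> dom;
  i_pi : H -> dom -> dom;
  i_rel : H -> dom -> Prop }.

Section Semantics.
Variable M : structure.

Fixpoint eval (rho : nat -> M) (t : term) : M :=
  match t with
  | TVar n => rho n
  | Tu U t => @i_u M U (eval rho t)
  | Tpi q t => @i_pi M q (eval rho t)
  end.

Definition upd (rho : nat -> M) (n : nat) (a : M) : nat -> M :=
  fun m => if m == n then a else rho m.

Fixpoint sat (rho : nat -> M) (f : formula) : Prop :=
  match f with
  | FRel p t => @i_rel M p (eval rho t)
  | FFalse => False
  | FNot g => ~ sat rho g
  | FAnd g h => sat rho g /\ sat rho h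
  | FOr g h => sat rho g \/ sat rho h
  | FImp g h => sat rho g -> sat rho h
  | FAll n g => forall a : M, sat (upd rho n a) g
  | FEx n g => exists a : M, sat (upd rho n a) g
  end.

Definition models (f : formula) : Prop := forall rho, sat rho f.
End Semantics.

Definition model_of (T : formula -> Prop) (M : structure) : Prop :=
  forall f, T f -> models M f.

Definition entails (T : formula -> Prop) (f : formula) : Prop :=
  forall M : structure, model_of T M -> models M f.

Definition consistent (T : formula -> Prop) : Prop :=
  exists M : structure, model_of T M.

Definition complete_theory (T : formula -> Prop) : Prop :=
  consistent T /\
  forall s, sentence s -> entails T s \/ entails T (FNot s).

Local Notation x := (TVar 0).
Local Notation fa f := (FAll 0 f).

Inductive PQM : formula -> Prop :=
  | ax_nbot : PQM (FEx 0 (FNot (FRel (sbot R d) x)))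
  | ax_top : PQM (fa (FRel (stop R d) x))
  | ax_le (p q : H) : sle p q -> PQM (fa (FImp (FRel p x) (FRel q x)))
  | ax_meet (p q : H) : compatible p q ->
      PQM (fa (FImp (FAnd (FRel p x) (FRel q x)) (FRel (smeet p q) x)))
  | ax_pi_i (p q : H) :
      PQM (fa (FImp (FRel p x) (FRel (sasaki p q) (Tpi q x))))
  | ax_pi_c (p q : H) : sle p q ->
      PQM (fa (FImp (FRel (sbot R d) (Tpi p (Tpi q x)))
                    (FRel (sbot R d) (Tpi p x))))
  | ax_pi_bot (q : H) :
      PQM (fa (FImp (FRel (sbot R d) (Tpi q x)) (FRel (sortho q) x)))
  | ax_u_i (p : H) (U : UU) :
      PQM (fa (FImp (FRel p x) (FRel (simage (mat_of U) p) (Tu U x))))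
  | ax_u_e (p : H) (U : UU) :
      PQM (fa (FImp (FRel p (Tu U x)) (FRel (simage (invmx (mat_of U)) p) x))).

End Language.

From Pilot Require Import Defs.
From HB Require Import structures.
From mathcomp Require Import all_boot all_order all_algebra.
From mathcomp Require Import reals.
From mathcomp.real_closed Require Import complex.
From mathcomp Require Import ring lra.
From Stdlib Require Import ClassicalEpsilon.
Set Implicit Arguments. Unset Strict Implicit. Unset Printing Implicit Defensive.
Import Order.TTheory GRing.Theory Num.Theory.
Local Open Scope ring_scope.

(* In a model of PQM_d every element a has a support s(a): the vectors v with
   [a : v^perp] form a subspace, and s(a) is its orthocomplement, so that
   [a : p] holds iff s(a) <= p.  Closure of these v under sums rests on the
   fact, which needs d >= 3, that an element lying on two distinct lines is
   bot.  Using a vector orthogonal to both lines, the T-rule (a consequence of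
   the projection axioms) moves the element onto two new lines whose squared
   tangent grows from rho to rho + rho^2/4; once it reaches 8 the new lines can
   be chosen orthogonal.  The axioms for pi_q and u_U then give
   s(t(a)) = t(s(a)) for the action of terms on subspaces, so the atoms true
   at a are determined by s(a).  Given a in M and finitely many atoms, a vector
   v of s(a) outside the finitely many proper subspaces attached to the false
   atoms, and an element of N with support the line of v, satisfy the same
   atoms.  A back-and-forth induction on formulas then shows that any two
   models satisfy the same sentences, and C^d with orthogonal projections is a
   model. *)

Section InnerProduct.
Variables (R : realType) (d : nat).
Local Notation C := (R[i]).
Local Notation vec := 'cV[C]_d.
Local Notation dot := (@dotv R d).

Lemma dotvE (u v : vec) : dot u v = \sum_i u i 0 * (v i 0)^*.
Proof. by rewrite /dotv /adjoint !mxE; apply: eq_bigr => i _; rewrite !mxE mulrC. Qed.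

Lemma dotvDl (u v w : vec) : dot (u + v) w = dot u w + dot v w.
Proof. by rewrite !dotvE -big_split; apply: eq_bigr => i _; rewrite mxE mulrDl. Qed.

Lemma dotvZl (a : C) (u w : vec) : dot (a *: u) w = a * dot u w.
Proof. by rewrite !dotvE mulr_sumr; apply: eq_bigr => i _; rewrite mxE mulrA. Qed.

Lemma dotvC (u v : vec) : dot v u = (dot u v)^*.
Proof.
rewrite !dotvE rmorph_sum; apply: eq_bigr => i _.
by rewrite rmorphM /= conjCK mulrC.
Qed.

Lemma dotvDr (u v w : vec) : dot w (u + v) = dot w u + dot w v.
Proof. by rewrite dotvC dotvDl rmorphD /= -!dotvC. Qed.

Lemma dotvZr (a : C) (u w : vec) : dot w (a *: u) = a^* * dot w u.
Proof. by rewrite dotvC dotvZl rmorphM /= -dotvC. Qed.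

Lemma dotv0l (u : vec) : dot 0 u = 0.
Proof. by rewrite -(scale0r 0) dotvZl mul0r. Qed.

Lemma dotv0r (u : vec) : dot u 0 = 0.
Proof. by rewrite dotvC dotv0l conjC0. Qed.

Lemma dotvNl (u v : vec) : dot (- u) v = - dot u v.
Proof. by rewrite -scaleN1r dotvZl mulN1r. Qed.

Lemma dotvNr (u v : vec) : dot v (- u) = - dot v u.
Proof. by rewrite dotvC dotvNl rmorphN /= -dotvC. Qed.

Lemma dotvBl (u v w : vec) : dot (u - v) w = dot u w - dot v w.
Proof. by rewrite dotvDl dotvNl. Qed.

Lemma dotvBr (u v w : vec) : dot w (u - v) = dot w u - dot w v.
Proof. by rewrite dotvDr dotvNr. Qed.

Lemma dotv_sym0 (u v : vec) : dot u v = 0 -> dot v u = 0.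
Proof. by move=> uv; rewrite dotvC uv conjC0. Qed.

Lemma dotv_ge0 (v : vec) : 0 <= dot v v.
Proof. by rewrite dotvE sumr_ge0 // => i _; rewrite mul_conjC_ge0. Qed.

Lemma dotv_eq0 (v : vec) : (dot v v == 0) = (v == 0).
Proof.
apply/idP/idP => [|/eqP->]; last by rewrite dotv0l.
rewrite dotvE psumr_eq0 => [/allP v0|i _]; last by rewrite mul_conjC_ge0.
apply/eqP/matrixP => i j; rewrite (ord1 j) mxE.
by have := v0 i (mem_index_enum _); rewrite mul_conjC_eq0 => /eqP.
Qed.

Lemma dotv_real (v : vec) : dot v v \is Num.real.
Proof. by rewrite realE dotv_ge0. Qed.

Lemma dotv_suml (I : Type) (r : seq I) (F : I -> vec) (w : vec) :
  dot (\sum_(i <- r) F i) w = \sum_(i <- r) dot (F i) w.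
Proof.
elim: r => [|x r IH]; first by rewrite !big_nil dotv0l.
by rewrite !big_cons dotvDl IH.
Qed.

Lemma dotv_sumr (I : Type) (r : seq I) (F : I -> vec) (w : vec) :
  dot w (\sum_(i <- r) F i) = \sum_(i <- r) dot w (F i).
Proof.
elim: r => [|x r IH]; first by rewrite !big_nil dotv0r.
by rewrite !big_cons dotvDr IH.
Qed.

End InnerProduct.

Section Projection.
Variables (R : realType) (d : nat).
Local Notation C := (R[i]).
Local Notation vec := 'cV[C]_d.
Local Notation dot := (@dotv R d).
Local Notation H := (subspace R d).
Local Notation mem := (@mem_sub R d).

Lemma mem_sub0 (p : H) : mem p 0.
Proof. by case: (proj2_sig p). Qed.

Lemma mem_subDZ (p : H) a u v : mem p u -> mem p v -> mem p (a *: u + v).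
Proof. by case: (proj2_sig p) => _; apply. Qed.

Lemma mem_subZ (p : H) a u : mem p u -> mem p (a *: u).
Proof. by move=> pu; rewrite -[_ *: _]addr0; apply: mem_subDZ (mem_sub0 p). Qed.

Lemma mem_subD (p : H) u v : mem p u -> mem p v -> mem p (u + v).
Proof. by rewrite -[u in mem _ (u + _)]scale1r; apply: mem_subDZ. Qed.

Lemma mem_subN (p : H) u : mem p u -> mem p (- u).
Proof. by rewrite -scaleN1r; apply: mem_subZ. Qed.

Lemma mem_subB (p : H) u v : mem p u -> mem p v -> mem p (u - v).
Proof. by move=> pu /mem_subN; apply: mem_subD. Qed.

Lemma mem_sub_sum (p : H) (I : eqType) (r : seq I) (F : I -> vec) :
  (forall i, i \in r -> mem p (F i)) -> mem p (\sum_(i <- r) F i).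
Proof.
elim: r => [|x r IH] pF; first by rewrite big_nil; apply: mem_sub0.
rewrite big_cons; apply: mem_subD; first by apply: pF; rewrite mem_head.
by apply: IH => i ir; apply: pF; rewrite inE ir orbT.
Qed.

Lemma mem_orthoP (S : H) v :
  mem (sortho S) v <-> (forall w, mem S w -> dot v w = 0).
Proof. by []. Qed.

Lemma mem_ortho_eq0 (S : H) v : mem S v -> mem (sortho S) v -> v = 0.
Proof. by move=> Sv /mem_orthoP /(_ v Sv) /eqP; rewrite dotv_eq0 => /eqP. Qed.

Fixpoint pairwise_orth (L : seq vec) : Prop :=
  match L with
  | [::] => True
  | e :: L' => [/\ e != 0, forall f, f \in L' -> dot e f = 0 & pairwise_orth L']
  end.

Definition proj_seq (L : seq vec) (v : vec) : vec :=
  \sum_(e <- L) (dot v e / dot e e) *: e.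

Lemma proj_seq_orth (L : seq vec) v e :
  (forall f, f \in L -> dot f e = 0) -> dot (proj_seq L v) e = 0.
Proof.
move=> Le; rewrite /proj_seq dotv_suml big1_seq // => f /andP[_ fL].
by rewrite dotvZl Le // mulr0.
Qed.

Lemma dotv_proj_seq (L : seq vec) v f :
  pairwise_orth L -> f \in L -> dot (proj_seq L v) f = dot v f.
Proof.
elim: L => [//|e L IH] /= [e0 eL oL]; rewrite inE => /orP [/eqP->|fL].
  rewrite /proj_seq big_cons dotvDl dotvZl mulfVK ?dotv_eq0 //.
  by rewrite proj_seq_orth ?addr0 // => g /eL /dotv_sym0.
by rewrite /proj_seq big_cons dotvDl dotvZl (eL f fL) mulr0 add0r IH.
Qed.

Lemma pairwise_orth_nth (L : seq vec) i j : pairwise_orth L ->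
  (i < size L)%N -> (j < size L)%N ->
  dot (nth 0 L i) (nth 0 L j) = if i == j then dot (nth 0 L i) (nth 0 L i) else 0.
Proof.
elim: L i j => [//|e L IH] [|i] [|j] /= [e0 eL oL] //; rewrite ?ltnS.
- by move=> _ jL; apply: eL; rewrite mem_nth.
- by move=> iL _; apply: dotv_sym0; apply: eL; rewrite mem_nth.
- by move=> iL jL; rewrite eqSS IH.
Qed.

Lemma pairwise_orth_neq0 (L : seq vec) e : pairwise_orth L -> e \in L -> e != 0.
Proof.
elim: L => [//|f L IH] /= [f0 _ oL]; rewrite inE => /orP [/eqP->//|].
exact: IH.
Qed.

(* An orthogonal family is linearly independent: the rows of its coordinate
   matrix have a right inverse. *)
Lemma size_pairwise_orth (L : seq vec) : pairwise_orth L -> (size L <= d)%N.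
Proof.
move=> oL.
pose A : 'M[C]_(size L, d) := \matrix_(j, i) (nth 0 L j) i 0.
pose B : 'M[C]_(d, size L) :=
  \matrix_(i, j) (((nth 0 L j) i 0)^* / dot (nth 0 L j) (nth 0 L j)).
have AB : A *m B = 1%:M.
  apply/matrixP => j k; rewrite !mxE.
  under eq_bigr do rewrite !mxE mulrA.
  rewrite -mulr_suml -dotvE pairwise_orth_nth // (inj_eq val_inj).
  case: eqP => [->|_]; last by rewrite mul0r.
  by rewrite mulfV // dotv_eq0 (pairwise_orth_neq0 oL) // mem_nth.
suff /eqP <- : row_free A by apply: rank_leq_col.
by apply/row_freeP; exists B.
Qed.

Lemma orth_basis_ex (S : H) : exists L, [/\ pairwise_orth L,
  forall e, e \in L -> mem S e & forall v, mem S v -> proj_seq L v = v].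
Proof.
apply: NNPP => noL.
have grow L : pairwise_orth L -> (forall e, e \in L -> mem S e) ->
    exists2 v, mem S v & proj_seq L v != v.
  move=> oL SL; apply: NNPP => nv; apply: noL; exists L; split => // v Sv.
  by apply: NNPP => nv'; apply: nv; exists v => //; apply/eqP.
suff [L [oL _ sL]] : exists L, [/\ pairwise_orth L,
    forall e, e \in L -> mem S e & size L = d.+1].
  by have := size_pairwise_orth oL; rewrite sL ltnn.
elim: d.+1 => [|n [L [oL SL <-]]]; first by exists [::].
have [v Sv nv] := grow L oL SL.
exists ((v - proj_seq L v) :: L); split => //=.
- split => // [|f fL]; first by rewrite subr_eq0 eq_sym.
  by rewrite dotvBl dotv_proj_seq // subrr.
- move=> e; rewrite inE => /orP [/eqP->|]; last exact: SL.
  apply: mem_subB => //; apply: mem_sub_sum => e' /SL; exact: mem_subZ.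
Qed.

Definition orth_basis (S : H) : seq vec :=
  proj1_sig (constructive_indefinite_description _ (orth_basis_ex S)).

Lemma orth_basisP (S : H) : [/\ pairwise_orth (orth_basis S),
  forall e, e \in orth_basis S -> mem S e &
  forall v, mem S v -> proj_seq (orth_basis S) v = v].
Proof. exact: (proj2_sig (constructive_indefinite_description _ (orth_basis_ex S))). Qed.

Definition proj (S : H) (v : vec) : vec := proj_seq (orth_basis S) v.

Lemma mem_proj (S : H) v : mem S (proj S v).
Proof.
have [_ SL _] := orth_basisP S.
by apply: mem_sub_sum => e /SL; apply: mem_subZ.
Qed.

Lemma mem_ortho_proj (S : H) v : mem (sortho S) (v - proj S v).
Proof.
have [oL _ Sid] := orth_basisP S; apply/mem_orthoP => w Sw.
rewrite -(Sid w Sw) /proj_seq dotv_sumr big1_seq // => e /andP[_ eL].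
by rewrite dotvZr dotvBl dotv_proj_seq // subrr mulr0.
Qed.

Lemma proj_unique (S : H) v a :
  mem S a -> mem (sortho S) (v - a) -> proj S v = a.
Proof.
move=> Sa oa; apply/eqP; rewrite -subr_eq0; apply/eqP.
apply: (@mem_ortho_eq0 S); first by apply: mem_subB => //; apply: mem_proj.
have -> : proj S v - a = (v - a) - (v - proj S v).
  by rewrite opprB [RHS]addrC addrA subrK.
by apply: mem_subB => //; apply: mem_ortho_proj.
Qed.

Lemma proj_id (S : H) v : mem S v -> proj S v = v.
Proof. by move=> Sv; apply: proj_unique => //; rewrite subrr; apply: mem_sub0. Qed.

Lemma proj_ortho (S : H) v : mem (sortho S) v -> proj S v = 0.
Proof. by move=> ov; apply: proj_unique; [apply: mem_sub0|rewrite subr0]. Qed.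

Lemma projDZ (S : H) a u v : proj S (a *: u + v) = a *: proj S u + proj S v.
Proof.
apply: proj_unique; first by apply: mem_subDZ; apply: mem_proj.
rewrite opprD addrACA -scalerBr.
by apply: mem_subDZ; apply: mem_ortho_proj.
Qed.

Lemma projZ (S : H) a u : proj S (a *: u) = a *: proj S u.
Proof. by have := projDZ S a u 0; rewrite addr0 (proj_id (mem_sub0 S)) addr0. Qed.

Lemma projD (S : H) u v : proj S (u + v) = proj S u + proj S v.
Proof. by have := projDZ S 1 u v; rewrite !scale1r. Qed.

Lemma mem_orthoK (S : H) v : mem (sortho (sortho S)) v <-> mem S v.
Proof.
split=> [oov|Sv]; last by apply/mem_orthoP => w /mem_orthoP /(_ v Sv) /dotv_sym0.
rewrite -(subrK (proj S v) v).
suff -> : v - proj S v = 0 by rewrite add0r; apply: mem_proj.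
apply: (@mem_ortho_eq0 (sortho S)); first exact: mem_ortho_proj.
apply: mem_subB => //; apply/mem_orthoP => w /mem_orthoP ow.
by apply: dotv_sym0; apply: ow; apply: mem_proj.
Qed.

Lemma dotv_proj (S : H) u v : dot (proj S u) v = dot (proj S u) (proj S v).
Proof.
rewrite -[v in LHS](subrK (proj S v)) dotvDr.
by rewrite (dotv_sym0 (@mem_ortho_proj S v _ (mem_proj S u))) add0r.
Qed.

End Projection.

Section Subspaces.
Variables (R : realType) (d : nat).
Local Notation C := (R[i]).
Local Notation vec := 'cV[C]_d.
Local Notation dot := (@dotv R d).
Local Notation H := (subspace R d).
Local Notation mem := (@mem_sub R d).

Lemma span1_sub (v : vec) : is_subspace (fun w => exists c : C, w = c *: v).
Proof.
split=> [|a _ _ [c1 ->] [c2 ->]]; first by exists 0; rewrite scale0r.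
by exists (a * c1 + c2); rewrite scalerDl scalerA.
Qed.
Definition span1 (v : vec) : H := exist _ _ (span1_sub v).

Lemma span2_sub (x y : vec) :
  is_subspace (fun w => exists a b : C, w = a *: x + b *: y).
Proof.
split=> [|c _ _ [a1 [b1 ->]] [a2 [b2 ->]]]; first by exists 0, 0; rewrite !scale0r addr0.
exists (c * a1 + a2), (c * b1 + b2).
by rewrite scalerDr !scalerDl !scalerA addrACA.
Qed.
Definition span2 (x y : vec) : H := exist _ _ (span2_sub x y).

Lemma hypL_sub (L : seq vec) :
  is_subspace (fun w => forall e, e \in L -> dot w e = 0).
Proof.
split=> [e _|a u w hu hw e eL]; first by rewrite dotv0l.
by rewrite dotvDl dotvZl hu // hw // mulr0 addr0.
Qed.
Definition hypL (L : seq vec) : H := exist _ _ (hypL_sub L).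

Definition hyp (v : vec) : H := hypL [:: v].

Lemma mem_hyp (v w : vec) : mem (hyp v) w <-> dot w v = 0.
Proof.
split=> [/(_ v (mem_head _ _)) //|wv e].
by rewrite inE => /eqP ->.
Qed.

Lemma sle_trans (p q r : H) : sle p q -> sle q r -> sle p r.
Proof. by move=> pq qr v /pq /qr. Qed.

Lemma seq_sub_trans (p q r : H) :
  Defs.seq_sub p q -> Defs.seq_sub q r -> Defs.seq_sub p r.
Proof. by move=> pq qr v; rewrite pq qr. Qed.

Lemma seq_sub_sle (p q : H) : Defs.seq_sub p q -> sle p q.
Proof. by move=> pq v /pq. Qed.

Lemma seq_sub_sym (p q : H) : Defs.seq_sub p q -> Defs.seq_sub q p.
Proof. by move=> pq v; rewrite pq. Qed.

Lemma sle_seq_sub (p q : H) : sle p q -> sle q p -> Defs.seq_sub p q.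
Proof. by move=> pq qp v; split; [apply: pq|apply: qp]. Qed.

Lemma mem_sasakiP (p q : H) w :
  mem (sasaki p q) w <-> exists2 v, mem p v & w = proj q v.
Proof.
split=> [[qw [u [v [ou pv wE]]]]|[v pv ->]].
  by exists v => //; rewrite -(proj_id qw) wE projD (proj_ortho ou) add0r.
split; first exact: mem_proj.
exists (- (v - proj q v)), v; split => //; last by rewrite opprB subrK.
exact/mem_subN/mem_ortho_proj.
Qed.

Lemma sasaki_mono (p p' q : H) : sle p p' -> sle (sasaki p q) (sasaki p' q).
Proof.
move=> pp' w /mem_sasakiP [v pv ->].
by apply/mem_sasakiP; exists v => //; apply: pp'.
Qed.

Lemma sasaki_sle (p q : H) : sle (sasaki p q) q.
Proof. by move=> w []. Qed.

Lemma sasaki_seq_sub (p p' q : H) :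
  Defs.seq_sub p p' -> Defs.seq_sub (sasaki p q) (sasaki p' q).
Proof.
by move=> pp' w; split; apply: sasaki_mono => v; rewrite pp'.
Qed.

Lemma sasaki_seq_subr (p q q' : H) :
  Defs.seq_sub q q' -> Defs.seq_sub (sasaki p q) (sasaki p q').
Proof.
move=> qq' w; rewrite !mem_sasakiP.
have projE v : proj q v = proj q' v.
  apply: proj_unique; first by apply/qq'/mem_proj.
  by move=> u /qq'; apply: mem_ortho_proj.
by split=> -[v pv ->]; exists v; rewrite ?projE.
Qed.

Lemma compatible_orth (p q : H) : sle p (sortho q) -> compatible p q.
Proof.
move=> pq v; split=> [pv|[u [w [[pu _] [pw _] ->]]]]; last exact: mem_subD.
exists 0, v; split; last by rewrite add0r.
- by split; apply: mem_sub0.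
- by split => //; apply: pq.
Qed.

Lemma smeet_orth (p q : H) : sle p (sortho q) -> sle (smeet p q) (sbot R d).
Proof. by move=> pq v [pv qv]; apply: (@mem_ortho_eq0 _ _ q) => //; apply: pq. Qed.

Lemma compatible_hypL (L : seq vec) (e : vec) :
  (forall f, f \in L -> dot e f = 0) -> compatible (hypL L) (hyp e).
Proof.
move=> eL v; split=> [hv|[u [w [[pu _] [pw _] ->]]]]; last exact: mem_subD.
set c := dot v e / dot e e.
exists (v - c *: e), (c *: e); split; last by rewrite subrK.
- split; first by apply: mem_subB => //; apply: mem_subZ => f /eL.
  apply/mem_hyp; rewrite dotvBl dotvZl.
  have [->|e0] := eqVneq e 0; first by rewrite !dotv0r mulr0 subr0.
  by rewrite /c mulfVK ?subrr // dotv_eq0.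
- split; first by apply: mem_subZ => f /eL.
  by move=> w /mem_hyp we; rewrite dotvZl dotv_sym0 ?mulr0.
Qed.

Lemma hypL_cons (L : seq vec) e :
  Defs.seq_sub (smeet (hypL L) (hyp e)) (hypL (e :: L)).
Proof.
move=> v; split=> [[vL /mem_hyp ve] f|vL].
  by rewrite inE => /orP [/eqP->|/vL].
split=> [f fL|]; last apply/mem_hyp; apply: vL; rewrite inE ?fL ?orbT ?eqxx //.
Qed.

Lemma span1_orth (u v : vec) : dot u v = 0 -> sle (span1 u) (sortho (span1 v)).
Proof. by move=> uv _ [c ->] _ [c' ->]; rewrite dotvZl dotvZr uv !mulr0. Qed.

Definition orth_comp (a b : vec) : vec := b - (dot b a / dot a a) *: a.

Lemma dotv_orth_comp (a b : vec) : dot (orth_comp a b) a = 0.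
Proof.
rewrite dotvBl dotvZl; have [->|a0] := eqVneq a 0; first by rewrite !dotv0r mulr0 subr0.
by rewrite mulfVK ?subrr // dotv_eq0.
Qed.

Lemma orth_comp_eq0 (a b : vec) : orth_comp a b = 0 -> mem (span1 a) b.
Proof. by move/eqP; rewrite subr_eq0 => /eqP ->; exists (dot b a / dot a a). Qed.

Lemma ortho_hyp (r : vec) : sle (sortho (hyp r)) (span1 r).
Proof.
move=> v ov; exists (dot v r / dot r r); apply/eqP; rewrite -subr_eq0 -dotv_eq0.
have wr := dotv_orth_comp r v.
have vw : dot v (orth_comp r v) = 0 by apply: ov; apply/mem_hyp.
by rewrite -/(orth_comp r v) {1}/orth_comp dotvBl vw dotvZl (dotv_sym0 wr) mulr0 subrr.
Qed.

Lemma exists_orth2 (a b : vec) : (3 <= d)%N ->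
  exists w, [/\ w != 0, dot w a = 0 & dot w b = 0].
Proof.
move=> d3.
pose A : 'M[C]_(d, 2) := \matrix_(i, j) (if j == 0 then (a i 0)^* else (b i 0)^*).
have : ~~ row_free A.
  rewrite -row_leq_rank; apply/negP => /leq_trans /(_ (rank_leq_col A)).
  by rewrite leqNgt (leq_trans _ d3).
rewrite -kermx_eq0 => /negP kerA0.
have [i ri] : exists i, row i (kermx A) != 0.
  apply: NNPP => nr; apply: kerA0; apply/eqP/row_matrixP => i; rewrite row0.
  by apply/eqP; apply: contraT => ?; case: nr; exists i.
have kA : row i (kermx A) *m A = 0 by rewrite -row_mul mulmx_ker row0.
exists (row i (kermx A))^T; split; first by rewrite trmx_eq0.
  have := congr1 (fun M : 'M_(1, 2) => M 0 0) kA; rewrite !mxE => <-.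
  by rewrite dotvE; apply: eq_bigr => k _; rewrite !mxE.
have := congr1 (fun M : 'M_(1, 2) => M 0 1) kA; rewrite !mxE => <-.
by rewrite dotvE; apply: eq_bigr => k _; rewrite !mxE.
Qed.

End Subspaces.

Section RealQuantities.
Variables (R : realType) (d : nat).
Local Notation C := (R[i]).
Local Notation vec := 'cV[C]_d.
Local Notation dot := (@dotv R d).
Local Notation RC := (real_complex R).

Lemma conj_RC (r : R) : (RC r)^* = RC r.
Proof. by rewrite conj_Creal // complex_real. Qed.

Definition sqnorm (v : vec) : R := complex.Re (dot v v).

Lemma sqnormE (v : vec) : dot v v = RC (sqnorm v).
Proof. by rewrite RRe_real // dotv_real. Qed.

Lemma sqnorm_ge0 (v : vec) : 0 <= sqnorm v.
Proof. by rewrite -lecR rmorph0 -sqnormE dotv_ge0. Qed.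

Lemma sqnorm_gt0 (v : vec) : (0 < sqnorm v) = (v != 0).
Proof. by rewrite -ltcR rmorph0 -sqnormE lt_def dotv_ge0 andbT dotv_eq0. Qed.

Definition sqdot (a b : vec) : R := complex.Re (dot a b * (dot a b)^*).

Lemma sqdotE (a b : vec) : dot a b * (dot a b)^* = RC (sqdot a b).
Proof. by rewrite RRe_real // realE mul_conjC_ge0. Qed.

Lemma sqdot_gt0 (a b : vec) : (0 < sqdot a b) = (dot a b != 0).
Proof. by rewrite -ltcR rmorph0 -sqdotE lt_def mul_conjC_ge0 mul_conjC_eq0 andbT. Qed.

Definition sqnorm_par (a b : vec) : R := sqdot a b / sqnorm a.
Definition sqnorm_perp (a b : vec) : R := sqnorm b - sqnorm_par a b.

(* The squared tangent of the angle between the lines spanned by a and b. *)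
Definition tan2 (a b : vec) : R := sqnorm_perp a b / sqnorm_par a b.

Lemma sqnorm_orth_comp (a b : vec) :
  a != 0 -> sqnorm (orth_comp a b) = sqnorm_perp a b.
Proof.
move=> a0; apply: complexI; rewrite -sqnormE.
rewrite [X in dot X _]/orth_comp dotvBl dotvZl.
rewrite (dotv_sym0 (dotv_orth_comp a b)) mulr0 subr0 /orth_comp dotvBr dotvZr.
rewrite /sqnorm_perp /sqnorm_par !rmorphB !fmorph_div /= -sqdotE -!sqnormE.
by rewrite (conj_Creal (dotv_real a)) [dot a b]dotvC conjCK [in RHS]mulrAC.
Qed.

Lemma sqnorm_par_ge0 (a b : vec) : 0 <= sqnorm_par a b.
Proof.
by rewrite divr_ge0 ?sqnorm_ge0 // -lecR rmorph0 -sqdotE mul_conjC_ge0.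
Qed.

Lemma tan2_equal_sqnorm (a b : vec) (n o : R) : n != 0 -> o != 0 ->
  sqnorm a = n -> sqnorm b = n -> dot a b = RC o ->
  sqnorm_par a b = o ^+ 2 / n /\ tan2 a b = (n ^+ 2 - o ^+ 2) / o ^+ 2.
Proof.
move=> n0 o0 an bn abo.
have sq : sqdot a b = o ^+ 2.
  by apply: complexI; rewrite -sqdotE abo conj_RC -rmorphM expr2.
rewrite /tan2 /sqnorm_perp /sqnorm_par sq an bn; split => //.
by field; rewrite o0 n0.
Qed.

Lemma dotv_frame (a B w : vec) (x1 y1 z1 x2 y2 z2 : C) :
  dot a B = 0 -> dot a w = 0 -> dot B w = 0 ->
  dot (x1 *: a + y1 *: B + z1 *: w) (x2 *: a + y2 *: B + z2 *: w) =
  x1 * x2^* * dot a a + y1 * y2^* * dot B B + z1 * z2^* * dot w w.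
Proof.
move=> aB aw Bw.
rewrite !dotvDl !dotvDr !dotvZl !dotvZr aB aw Bw !(dotv_sym0 aB, dotv_sym0 aw, dotv_sym0 Bw).
by rewrite !mulr0 !addr0 !add0r !mulrA.
Qed.

End RealQuantities.

Section ModelAxioms.
Variables (R : realType) (d : nat) (M : structure R d).
Hypothesis HM : model_of (@PQM R d) M.
Local Notation vec := 'cV[R[i]]_d.
Local Notation dot := (@dotv R d).
Local Notation H := (subspace R d).
Local Notation mem := (@mem_sub R d).
Local Notation rel := (@i_rel R d M).
Local Notation pi := (@i_pi R d M).
Local Notation uu := (@i_u R d M).
Local Notation bot := (sbot R d).

Lemma exists_rel_nbot (a0 : M) : exists a, ~ rel bot a.
Proof. exact: (HM (ax_nbot R d) (fun _ => a0)). Qed.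

Lemma rel_stop (a : M) : rel (stop R d) a.
Proof. exact: (HM (ax_top R d) (fun _ => a) a). Qed.

Lemma rel_sle (p q : H) (a : M) : sle p q -> rel p a -> rel q a.
Proof. by move=> pq; apply: (HM (ax_le pq) (fun _ => a) a). Qed.

Lemma rel_meet (p q : H) (a : M) :
  compatible p q -> rel p a -> rel q a -> rel (smeet p q) a.
Proof. by move=> pq pa qa; apply: (HM (ax_meet pq) (fun _ => a) a). Qed.

Lemma rel_pi (p q : H) (a : M) : rel p a -> rel (sasaki p q) (pi q a).
Proof. exact: (HM (ax_pi_i p q) (fun _ => a) a). Qed.

Lemma rel_pi_bot (p q : H) (a : M) :
  sle p q -> rel bot (pi p (pi q a)) -> rel bot (pi p a).
Proof. by move=> pq; apply: (HM (ax_pi_c pq) (fun _ => a) a). Qed.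

Lemma rel_ortho_pi_bot (q : H) (a : M) : rel bot (pi q a) -> rel (sortho q) a.
Proof. exact: (HM (ax_pi_bot q) (fun _ => a) a). Qed.

Lemma rel_u (p : H) U (a : M) : rel p a -> rel (simage (mat_of U) p) (uu U a).
Proof. exact: (HM (ax_u_i p U) (fun _ => a) a). Qed.

Lemma rel_u_inv (p : H) U (a : M) :
  rel p (uu U a) -> rel (simage (invmx (mat_of U)) p) a.
Proof. exact: (HM (ax_u_e p U) (fun _ => a) a). Qed.

Lemma rel_full (p : H) (a : M) : (forall v, mem p v) -> rel p a.
Proof. by move=> pT; apply: rel_sle (rel_stop a) => v _; apply: pT. Qed.

Lemma rel_span1_orth_bot (a b : vec) (c : M) : dot a b = 0 ->
  rel (span1 a) c -> rel (span1 b) c -> rel bot c.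
Proof.
move=> /span1_orth ab ca cb.
by apply: rel_sle (smeet_orth ab) _; apply: rel_meet => //; apply: compatible_orth.
Qed.

(* Projecting onto the hyperplane r^perp sends the lines of a and b to
   orthogonal lines, so pi (hyp r) c is bot and c lies in the line of r. *)
Lemma T_rule (a b r : vec) (c : M) : r != 0 ->
  dot a b * dot r r = dot a r * dot r b ->
  rel (span1 a) c -> rel (span1 b) c -> rel (span1 r) c.
Proof.
move=> r0 abr ca cb.
have rr0 : dot r r != 0 by rewrite dotv_eq0.
have projE v : proj (hyp r) v = orth_comp r v.
  apply: proj_unique; first by apply/mem_hyp; apply: dotv_orth_comp.
  move=> w /mem_hyp wr; rewrite /orth_comp opprB addrC subrK dotvZl.
  by rewrite (dotv_sym0 wr) mulr0.
have sasE v : sle (sasaki (span1 v) (hyp r)) (span1 (orth_comp r v)).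
  by move=> _ /mem_sasakiP [_ [k ->] ->]; exists k; rewrite projZ projE.
have orth_ab : dot (orth_comp r a) (orth_comp r b) = 0.
  rewrite /orth_comp !dotvBl !dotvBr !dotvZl !dotvZr rmorphM fmorphV /=.
  rewrite (conj_Creal (dotv_real r)) -dotvC [dot r b]dotvC in abr *.
  move: abr; move: (dot b r)^* (dot a r) (dot a b) => x y z xyz.
  by rewrite (mulfVK rr0) subrr subr0 mulrAC [x * y]mulrC -xyz mulfK ?subrr.
have := rel_ortho_pi_bot (rel_span1_orth_bot orth_ab
  (rel_sle (sasE a) (rel_pi _ ca)) (rel_sle (sasE b) (rel_pi _ cb))).
exact/rel_sle/ortho_hyp.
Qed.

End ModelAxioms.

Section TwoLines.
Variables (R : realType) (d : nat) (M : structure R d).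
Hypotheses (HM : model_of (@PQM R d) M) (d3 : (3 <= d)%N).
Local Notation C := (R[i]).
Local Notation vec := 'cV[C]_d.
Local Notation dot := (@dotv R d).
Local Notation RC := (real_complex R).
Local Notation rel := (@i_rel R d M).
Local Notation bot := (sbot R d).

Section Frame.
Variables (a B w : vec) (beta : C) (g k t : R).
Hypotheses (aB : dot a B = 0) (aw : dot a w = 0) (Bw : dot B w = 0).
Hypotheses (BB : dot B B = RC k) (gE : beta * beta^* * dot a a = RC g).

Let F x y z := x *: a + y *: B + z *: w.

Let FE x1 y1 z1 x2 y2 z2 : dot (F x1 y1 z1) (F x2 y2 z2) =
  x1 * x2^* * dot a a + y1 * y2^* * RC k + z1 * z2^* * dot w w.
Proof. by rewrite dotv_frame // BB. Qed.

Definition frame_vec (s : R) : vec := F (beta * RC t) 1 (RC s).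

Lemma dotv_frame_vec (s s' : R) : dot (frame_vec s) (frame_vec s') =
  RC (g * t ^+ 2 + k) + RC s * RC s' * dot w w.
Proof.
rewrite FE !conj_RC ?conjC1 rmorphM /= conj_RC.
by rewrite !(rmorphD, rmorphM, rmorphXn) /= -gE; ring.
Qed.

(* With s^2 |w|^2 = (t - 1) |B|^2 the frame vector satisfies the hypothesis
   of the T-rule for the lines of a and b = beta a + B. *)
Lemma rel_frame_vec (s : R) (c : M) :
  RC s * RC s * dot w w = RC (t - 1) * RC k -> 0 <= g -> 0 < k -> 1 <= t ->
  rel (span1 a) c -> rel (span1 (beta *: a + B)) c -> rel (span1 (frame_vec s)) c.
Proof.
move=> sw g0 k0 t1 ca cb.
have rrE : dot (frame_vec s) (frame_vec s) = RC (g * t ^+ 2 + t * k).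
  by rewrite dotv_frame_vec sw !(rmorphD, rmorphB, rmorphM, rmorph1) /=; ring.
apply: (T_rule HM _ _ ca cb).
  rewrite -dotv_eq0 rrE fmorph_eq0 gt_eqF //.
  have := mulr_ge0 g0 (sqr_ge0 t); have := mulr_gt0 (lt_le_trans ltr01 t1) k0.
  lra.
have aF : a = F 1 0 0 by rewrite /F !scale0r !addr0 scale1r.
have -> : beta *: a + B = F beta 1 0 by rewrite /F scale0r addr0 scale1r.
rewrite rrE {1 2}aF !FE !(conjC0, conjC1, rmorphM, conj_RC) /= conj_RC.
by rewrite !(rmorphD, rmorphB, rmorphM, rmorphXn, rmorph1) /= -gE; ring.
Qed.

End Frame.

Lemma two_lines_step (a b : vec) (c : M) (t : R) :
  a != 0 -> 0 < sqnorm_perp a b -> 1 <= t ->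
  rel (span1 a) c -> rel (span1 b) c ->
  exists a' b', [/\ rel (span1 a') c, rel (span1 b') c,
    sqnorm a' = sqnorm_par a b * t ^+ 2 + t * sqnorm_perp a b,
    sqnorm b' = sqnorm_par a b * t ^+ 2 + t * sqnorm_perp a b &
    dot a' b' = RC (sqnorm_par a b * t ^+ 2 + (2 - t) * sqnorm_perp a b)].
Proof.
move=> a0 k0 t1 ca cb.
set g := sqnorm_par a b; set k := sqnorm_perp a b in k0 *.
set beta := dot b a / dot a a; set B := orth_comp a b.
have [w [w0 wa wb]] := exists_orth2 a b d3.
have aB : dot a B = 0 := dotv_sym0 (dotv_orth_comp a b).
have aw : dot a w = 0 := dotv_sym0 wa.
have Bw : dot B w = 0 by rewrite dotvBl dotvZl (dotv_sym0 wb) aw mulr0 subrr.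
have BB : dot B B = RC k by rewrite sqnormE /B sqnorm_orth_comp.
have gE : beta * beta^* * dot a a = RC g.
  rewrite /g /sqnorm_par [RHS]fmorph_div /= -sqdotE -sqnormE [dot a b]dotvC conjCK.
  rewrite /beta rmorphM fmorphV /= (conj_Creal (dotv_real a)); field.
  by rewrite dotv_eq0.
have bE : b = beta *: a + B by rewrite addrC subrK.
rewrite bE in cb; have g0 : 0 <= g := sqnorm_par_ge0 a b.
clearbody g k beta.
set s := Num.sqrt ((t - 1) * k / sqnorm w).
have sw (s' : R) : s' * s' = s * s -> RC s' * RC s' * dot w w = RC (t - 1) * RC k.
  move=> ss; rewrite sqnormE -!rmorphM ss -expr2 sqr_sqrtr ?divfK ?gt_eqF ?sqnorm_gt0 //.
  by apply: divr_ge0 _ (sqnorm_ge0 w); apply: mulr_ge0 _ (ltW k0); rewrite subr_ge0.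
have rrE s' : s' * s' = s * s ->
    sqnorm (frame_vec a B w beta t s') = g * t ^+ 2 + t * k.
  move=> /sw ss; apply: complexI; rewrite -sqnormE (dotv_frame_vec t aB aw Bw BB gE) ss.
  by rewrite !(rmorphD, rmorphB, rmorphM, rmorph1) /=; ring.
exists (frame_vec a B w beta t s), (frame_vec a B w beta t (- s)); split.
- exact: (rel_frame_vec aB aw Bw BB gE (sw s erefl) g0 k0 t1 ca cb).
- exact: (rel_frame_vec aB aw Bw BB gE (sw (- s) (mulrNN s s)) g0 k0 t1 ca cb).
- exact: rrE.
- by rewrite rrE ?mulrNN.
rewrite (dotv_frame_vec t aB aw Bw BB gE) rmorphN /= mulrN mulNr (sw s erefl).
by rewrite !(rmorphD, rmorphB, rmorphM, rmorphXn, rmorph1) /=; ring.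
Qed.

Lemma tan2_ge8_two_lines_bot (a b : vec) (c : M) :
  a != 0 -> 0 < sqnorm_par a b -> 8 <= tan2 a b ->
  rel (span1 a) c -> rel (span1 b) c -> rel bot c.
Proof.
move=> a0 g0 rho8 ca cb.
have kE : sqnorm_perp a b = tan2 a b * sqnorm_par a b by rewrite divfK ?gt_eqF.
set g := sqnorm_par a b in g0 kE *; set rho := tan2 a b in rho8 kE *.
have k0 : 0 < sqnorm_perp a b by rewrite kE mulr_gt0 //; lra.
set sq := Num.sqrt (rho ^+ 2 - 8 * rho).
have sqE : sq ^+ 2 = rho ^+ 2 - 8 * rho by rewrite sqr_sqrtr //; nra.
have sq0 : 0 <= sq := sqrtr_ge0 _.
have t1 : 1 <= (rho + sq) / 2 by lra.
have [a' [b' [ca' cb' _ _ a'b']]] := two_lines_step a0 k0 t1 ca cb.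
apply: (rel_span1_orth_bot HM _ ca' cb'); rewrite a'b' -/g kE.
(* (rho + sq) / 2 is a root of t^2 - rho t + 2 rho. *)
have -> : g * ((rho + sq) / 2) ^+ 2 + (2 - (rho + sq) / 2) * (rho * g) =
          g * (sq ^+ 2 - (rho ^+ 2 - 8 * rho)) / 4 by field.
by rewrite sqE subrr mulr0 mul0r rmorph0.
Qed.

Lemma tan2_two_lines_bot_iter (r0 : R) (n : nat) : 0 < r0 ->
  forall (a b : vec) (c : M),
  a != 0 -> 0 < sqnorm_par a b -> r0 <= tan2 a b ->
  8 <= tan2 a b + n%:R * (r0 ^+ 2 / 4) ->
  rel (span1 a) c -> rel (span1 b) c -> rel bot c.
Proof.
move=> r00; elim: n => [|n IH] a b c a0 g0 r0rho rho8 ca cb.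
  by apply: tan2_ge8_two_lines_bot ca cb => //; rewrite mul0r addr0 in rho8.
have kE : sqnorm_perp a b = tan2 a b * sqnorm_par a b by rewrite divfK ?gt_eqF.
set g := sqnorm_par a b in g0 kE *; set rho := tan2 a b in r0rho rho8 kE *.
have k0 : 0 < sqnorm_perp a b by rewrite kE mulr_gt0 //; lra.
have t1 : 1 <= (2 : R) by rewrite ler1n.
have [a' [b' [ca' cb']]] := two_lines_step a0 k0 t1 ca cb.
rewrite -/g kE => na' nb' a'b'.
have N0 : g * 2 ^+ 2 + 2 * (rho * g) != 0 by rewrite gt_eqF //; nra.
have O0 : g * 2 ^+ 2 + (2 - 2) * (rho * g) != 0 by rewrite gt_eqF //; nra.
have [g'E rho'E] := tan2_equal_sqnorm N0 O0 na' nb' a'b'.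
have {}rho'E : tan2 a' b' = rho + rho ^+ 2 / 4.
  by rewrite rho'E; field; rewrite (gt_eqF g0).
have rr : r0 ^+ 2 <= rho ^+ 2 by rewrite ler_pXn2r // nnegrE ltW // (lt_le_trans r00).
apply: (IH a' b' c) => //; rewrite ?rho'E.
- by rewrite -sqnorm_gt0 na' lt_neqAle eq_sym N0 /=; nra.
- by rewrite g'E divr_gt0 // ?exprn_gt0 // lt_neqAle eq_sym (N0, O0) /=; nra.
- have := sqr_ge0 rho; lra.
- by move: rho8; rewrite -[n.+1]addn1 natrD; lra.
Qed.

Lemma two_lines_bot (a b : vec) (c : M) : a != 0 -> ~ mem_sub (span1 a) b ->
  rel (span1 a) c -> rel (span1 b) c -> rel bot c.
Proof.
move=> a0 bNa ca cb.
have [ab0|ab0] := eqVneq (dot a b) 0; first exact: (rel_span1_orth_bot HM ab0 ca cb).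
have g0 : 0 < sqnorm_par a b by rewrite divr_gt0 ?sqnorm_gt0 ?sqdot_gt0.
have k0 : 0 < sqnorm_perp a b.
  by rewrite -sqnorm_orth_comp // sqnorm_gt0; apply/eqP => /orth_comp_eq0.
have rho0 : 0 < tan2 a b by rewrite divr_gt0.
have q0 : 0 <= 32 / tan2 a b ^+ 2 by rewrite divr_ge0 ?sqr_ge0.
have := archi_boundP q0; set n := Num.Def.archi_bound _.
rewrite ltr_pdivrMr ?exprn_gt0 // => /ltW hn.
apply: (tan2_two_lines_bot_iter (n := n) rho0 a0 g0 (lexx _) _ ca cb).
have := ltW rho0; lra.
Qed.

End TwoLines.

Section Support.
Variables (R : realType) (d : nat) (M : structure R d).
Hypotheses (HM : model_of (@PQM R d) M) (d3 : (3 <= d)%N).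
Local Notation C := (R[i]).
Local Notation vec := 'cV[C]_d.
Local Notation dot := (@dotv R d).
Local Notation H := (subspace R d).
Local Notation mem := (@mem_sub R d).
Local Notation rel := (@i_rel R d M).

Lemma rel_hypZ (x : vec) (c : C) (a : M) : rel (hyp x) a -> rel (hyp (c *: x)) a.
Proof. by apply: (rel_sle HM) => w /mem_hyp wx; apply/mem_hyp; rewrite dotvZr wx mulr0. Qed.

Lemma sasaki_hyp_span2 (x y : vec) : x != 0 ->
  sle (sasaki (hyp x) (span2 x y)) (span1 (orth_comp x y)).
Proof.
move=> x0 w [[al [be wE]] [u [h [ou /mem_hyp hx wuh]]]].
have xq : mem (span2 x y) x by exists 1, 0; rewrite scale1r scale0r addr0.
have : dot w x = 0 by rewrite wuh dotvDl (ou x xq) hx addr0.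
rewrite wE dotvDl !dotvZl => /eqP; rewrite addr_eq0 => /eqP alE.
exists be; rewrite /orth_comp scalerBr scalerA addrC; congr (_ + _).
have xx0 : dot x x != 0 by rewrite dotv_eq0.
rewrite -scaleNr; congr (_ *: _); apply: (mulIf xx0).
by rewrite alE mulNr -mulrA mulfVK.
Qed.

Lemma rel_hypD (x y : vec) (a : M) :
  rel (hyp x) a -> rel (hyp y) a -> rel (hyp (x + y)) a.
Proof.
move=> ax ay.
have [->|x0] := eqVneq x 0; first by rewrite add0r.
have [->|y0] := eqVneq y 0; first by rewrite addr0.
have [/orth_comp_eq0 [c ->]|x'0] := eqVneq (orth_comp x y) 0.
  by rewrite -{1}[x]scale1r -scalerDl; apply: rel_hypZ.
have [/orth_comp_eq0 [c ->]|y'0] := eqVneq (orth_comp y x) 0.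
  by rewrite -{2}[y]scale1r -scalerDl; apply: rel_hypZ.
set q := span2 x y.
have q_yx : Defs.seq_sub (span2 y x) q.
  by move=> v; split=> -[al [be ->]]; exists be, al; rewrite addrC.
have ax' := rel_sle HM (@sasaki_hyp_span2 x y x0) (rel_pi HM q ax).
have ay' := rel_pi HM q ay.
have {}ay' := rel_sle HM (seq_sub_sle (sasaki_seq_subr (hyp y) (seq_sub_sym q_yx))) ay'.
have {}ay' := rel_sle HM (@sasaki_hyp_span2 y x y0) ay'.
have y'Nx' : ~ mem (span1 (orth_comp x y)) (orth_comp y x).
  move=> [c y'E].
  have x'y : dot (orth_comp x y) y = dot (orth_comp x y) (orth_comp x y).
    by rewrite [in RHS]/orth_comp dotvBr dotvZr dotv_orth_comp mulr0 subr0.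
  have := dotv_orth_comp y x; rewrite y'E dotvZl x'y => /eqP.
  rewrite mulf_eq0 dotv_eq0 (negbTE x'0) orbF => /eqP c0.
  by move: y'0; rewrite y'E c0 scale0r eqxx.
have := rel_ortho_pi_bot HM (two_lines_bot HM d3 x'0 y'Nx' ax' ay').
apply: (rel_sle HM) => v vq; apply/mem_hyp; apply: vq.
by exists 1, 1; rewrite !scale1r.
Qed.

Lemma orth_vecs_sub (a : M) : is_subspace (fun v => rel (hyp v) a).
Proof.
split; first by apply: (rel_full HM) => v; apply/mem_hyp; rewrite dotv0r.
by move=> c u v au av; apply: rel_hypD => //; apply: rel_hypZ.
Qed.
Definition orth_vecs (a : M) : H := exist _ _ (orth_vecs_sub a).

Definition support (a : M) : H := sortho (orth_vecs a).

Lemma rel_hypL (a : M) (L : seq vec) : pairwise_orth L ->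
  (forall e, e \in L -> mem (orth_vecs a) e) -> rel (hypL L) a.
Proof.
elim: L => [|e L IH] /=; first by move=> _ _; apply: (rel_full HM) => v f.
move=> [e0 eL oL] La.
have aL : rel (hypL L) a by apply: IH => // f fL; apply: La; rewrite inE fL orbT.
have := rel_meet HM (compatible_hypL eL) aL (La e (mem_head _ _)).
exact/rel_sle/seq_sub_sle/hypL_cons.
Qed.

Lemma rel_support (a : M) : rel (support a) a.
Proof.
have [oL La Lid] := orth_basisP (orth_vecs a).
apply: (rel_sle HM) (rel_hypL oL La) => v vL w aw.
rewrite -(Lid w aw) /proj_seq dotv_sumr big1_seq // => e /andP[_ eL].
by rewrite dotvZr vL // mulr0.
Qed.

Lemma rel_supportP (p : H) (a : M) : rel p a <-> sle (support a) p.
Proof.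
split=> [ap v av|sp]; last exact: (rel_sle HM) sp (rel_support a).
apply/mem_orthoK => w wp; apply: av; apply: (rel_sle HM) ap => u pu.
by apply/mem_hyp; apply: dotv_sym0; apply: wp.
Qed.

End Support.

Section TermAction.
Variables (R : realType) (d : nat).
Local Notation C := (R[i]).
Local Notation vec := 'cV[C]_d.
Local Notation H := (subspace R d).
Local Notation mem := (@mem_sub R d).

Fixpoint term_sub (t : term R d) (s : H) : H :=
  match t with
  | TVar _ => s
  | Tu U t => simage (mat_of U) (term_sub t s)
  | Tpi q t => sasaki (term_sub t s) q
  end.

Fixpoint term_vec (t : term R d) (v : vec) : vec :=
  match t with
  | TVar _ => v
  | Tu U t => mat_of U *m term_vec t v
  | Tpi q t => proj q (term_vec t v)
  end.

Lemma term_vecDZ t c u v :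
  term_vec t (c *: u + v) = c *: term_vec t u + term_vec t v.
Proof.
elim: t => [n|U t IH|q t IH] //=; first by rewrite IH mulmxDr scalemxAr.
by rewrite IH projDZ.
Qed.

Lemma term_vec0 t : term_vec t 0 = 0.
Proof. by have := term_vecDZ t (-1) 0 0; rewrite scaler0 addr0 scaleN1r addNr. Qed.

Lemma mem_term_subP t s w :
  mem (term_sub t s) w <-> exists2 v, mem s v & w = term_vec t v.
Proof.
elim: t w => [n|U t IH|q t IH] w.
- by split => [sw|[v sv ->]]; first exists w.
- split => [[v /IH [v' sv' ->] ->]|[v sv ->]]; first by exists v'.
  by exists (term_vec t v) => //; apply/IH; exists v.
- rewrite [term_sub _ _]/= mem_sasakiP; split => [[v /IH [v' sv' ->] ->]|[v sv ->]].
    by exists v'.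
  by exists (term_vec t v) => //; apply/IH; exists v.
Qed.

Lemma mem_term_sub t (s : H) v : mem s v -> mem (term_sub t s) (term_vec t v).
Proof. by move=> sv; apply/mem_term_subP; exists v. Qed.

Lemma term_sub_mono t (s s' : H) : sle s s' -> sle (term_sub t s) (term_sub t s').
Proof.
move=> ss' w /mem_term_subP [v sv ->].
by apply: mem_term_sub; apply: ss'.
Qed.

Lemma term_preim_sub t (p : H) : is_subspace (fun u => mem p (term_vec t u)).
Proof.
split=> [|c u v pu pv]; first by rewrite term_vec0; apply: mem_sub0.
by rewrite term_vecDZ; apply: mem_subDZ.
Qed.
Definition term_preim t p : H := exist _ _ (term_preim_sub t p).

Lemma simage_seq_sub (A : 'M[C]_d) (p q : H) :
  Defs.seq_sub p q -> Defs.seq_sub (simage A p) (simage A q).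
Proof. by move=> pq w; split=> -[v /pq pv ->]; exists v. Qed.

Lemma unitary_mulmxV (U : unitaryT R d) : mat_of U *m invmx (mat_of U) = 1%:M.
Proof. by case: U => /= U /eqP /mulmx1_unit [Uu _]; apply: mulmxV. Qed.

End TermAction.

Definition eval1 (R : realType) (d : nat) (M : structure R d) (a : M)
  (t : term R d) : M := eval (fun _ => a) t.

Section SupportTerms.
Variables (R : realType) (d : nat) (M : structure R d).
Hypotheses (HM : model_of (@PQM R d) M) (d3 : (3 <= d)%N).
Local Notation vec := 'cV[R[i]]_d.
Local Notation dot := (@dotv R d).
Local Notation H := (subspace R d).
Local Notation mem := (@mem_sub R d).
Local Notation rel := (@i_rel R d M).
Local Notation pi := (@i_pi R d M).
Local Notation uu := (@i_u R d M).
Local Notation bot := (sbot R d).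
Local Notation support := (support HM d3).

Lemma rel_hyp_pi (q : H) (u : vec) (b : M) :
  mem q u -> rel (hyp u) (pi q b) -> rel (hyp u) b.
Proof.
move=> qu bu.
have ub : rel bot (pi (span1 u) (pi q b)).
  apply: (rel_sle HM) (rel_pi HM (span1 u) bu) => w [[c ->] [o [h [ou /mem_hyp hu ceq]]]].
  have : c * dot u u = 0.
    by rewrite -dotvZl ceq dotvDl hu addr0; apply: ou; exists 1; rewrite scale1r.
  by move/eqP; rewrite mulf_eq0 dotv_eq0 => /orP [] /eqP ->; rewrite ?scale0r ?scaler0.
have uq : sle (span1 u) q by move=> w [c ->]; apply: mem_subZ.
apply: (rel_sle HM) (rel_ortho_pi_bot HM (rel_pi_bot HM uq ub)) => w wu.
by apply/mem_hyp; apply: wu; exists 1; rewrite scale1r.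
Qed.

Lemma support_u U (b : M) :
  Defs.seq_sub (support (uu U b)) (simage (mat_of U) (support b)).
Proof.
apply: sle_seq_sub.
  by apply/(rel_supportP HM d3); apply: (rel_u HM); apply: rel_support.
move=> _ [v vb ->].
have /(rel_supportP HM d3)/(_ v vb) [w uw ->] :=
  rel_u_inv HM (rel_support HM d3 (uu U b)).
by rewrite mulmxA unitary_mulmxV mul1mx.
Qed.

Lemma support_pi (q : H) (b : M) :
  Defs.seq_sub (support (pi q b)) (sasaki (support b) q).
Proof.
apply: sle_seq_sub.
  by apply/(rel_supportP HM d3); apply: (rel_pi HM); apply: rel_support.
move=> _ /mem_sasakiP [v vb ->] z zq.
have qz : rel (hyp (proj q z)) (pi q b).
  have zNq : rel (hyp (z - proj q z)) (pi q b).
    apply: (rel_sle HM) (rel_pi HM q (rel_stop HM b)) => w [qw _].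
    exact/mem_hyp/dotv_sym0/(@mem_ortho_proj _ _ q z _ qw).
  have := @mem_subB _ _ (orth_vecs HM d3 (pi q b)) _ _ zq zNq.
  by rewrite opprB addrC subrK.
have vz : dot v (proj q z) = 0 := vb _ (rel_hyp_pi (mem_proj q z) qz).
by rewrite dotv_proj dotvC -dotv_proj -dotvC vz.
Qed.

Lemma support_eval1 t (a : M) :
  Defs.seq_sub (support (eval1 a t)) (term_sub t (support a)).
Proof.
elim: t => [n|U t IH|q t IH]; first by move=> v.
  exact: seq_sub_trans (support_u U (eval1 a t)) (simage_seq_sub _ IH).
exact: seq_sub_trans (support_pi q (eval1 a t)) (sasaki_seq_sub _ IH).
Qed.

Lemma rel_eval1P (p : H) (a : M) t :
  rel p (eval1 a t) <-> sle (term_sub t (support a)) p.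
Proof.
rewrite (rel_supportP HM d3).
by split=> tp v /(support_eval1 t a v); apply: tp.
Qed.

End SupportTerms.

Section Avoid.
Variables (R : realType) (d : nat).
Local Notation vec := 'cV[R[i]]_d.
Local Notation H := (subspace R d).
Local Notation mem := (@mem_sub R d).

Lemma mem_two_points (Q : H) (u v : vec) (n m : nat) : n != m ->
  mem Q (v + n%:R *: u) -> mem Q (v + m%:R *: u) -> mem Q u /\ mem Q v.
Proof.
move=> nm Qn Qm.
have nm0 : (n%:R - m%:R : R[i]) != 0 by rewrite subr_eq0 eqr_nat.
have Qu : mem Q u.
  have := mem_subZ (n%:R - m%:R)^-1 (mem_subB Qn Qm).
  by rewrite opprD addrACA subrr add0r -scalerBl scalerA mulVf // scale1r.
by split => //; have := mem_subB Qn (mem_subZ n%:R Qu); rewrite addrK.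
Qed.

Lemma line_eventually_avoids (I : Type) (Ks : seq I) (K : I -> H) (u v : vec) :
  exists N, forall j, List.In j Ks -> forall m, (N <= m)%N ->
    mem (K j) (v + m%:R *: u) -> mem (K j) u /\ mem (K j) v.
Proof.
elim: Ks => [|j0 Ks [N KsN]]; first by exists 0%N.
have [[n Kn]|noK] := classic (exists n : nat, mem (K j0) (v + n%:R *: u)).
  exists (maxn N n.+1) => j [<-|jKs] m; rewrite geq_max => /andP[Nm nm].
    by apply: mem_two_points Kn; rewrite neq_ltn nm.
  exact: KsN.
exists N => j [<-|jKs] m Nm Km; last exact: KsN Km.
by case: noK; exists m.
Qed.

Lemma avoid_subspaces (S : H) (I : Type) (Ks : seq I) (K : I -> H) (P : I -> Prop) :
  (forall i, List.In i Ks -> P i -> exists2 u, mem S u & ~ mem (K i) u) ->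
  exists2 v, mem S v & forall i, List.In i Ks -> P i -> ~ mem (K i) v.
Proof.
elim: Ks => [|i Ks IH] SK; first by exists 0 => //; apply: mem_sub0.
have [v1 Sv1 v1K] := IH (fun j jKs => SK j (or_intror jKs)).
have [[Pi Kv1]|v1i] := classic (P i /\ mem (K i) v1); last first.
  exists v1 => // j [<-|jKs] Pj; last exact: v1K.
  by move=> Kv1; apply: v1i.
have [u Su Ku] := SK i (or_introl erefl) Pi.
have [N KsN] := line_eventually_avoids Ks K u v1.
exists (v1 + N.+1%:R *: u); first by apply: mem_subD => //; apply: mem_subZ.
move=> j [<-|jKs] Pj Kj.
  have Kv1' : mem (K i) (v1 + 0%:R *: u) by rewrite scale0r addr0.
  by have [] := @mem_two_points _ u v1 N.+1 0 isT Kj Kv1'.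
by apply: (v1K j jKs Pj); case: (KsN j jKs N.+1 (leqnSn N) Kj).
Qed.

End Avoid.

Section Lines.
Variables (R : realType) (d : nat).
Local Notation vec := 'cV[R[i]]_d.
Local Notation dot := (@dotv R d).
Local Notation H := (subspace R d).
Local Notation mem := (@mem_sub R d).

Lemma sasaki_span1 (x y : vec) :
  dot x y != 0 -> Defs.seq_sub (sasaki (span1 x) (span1 y)) (span1 y).
Proof.
move=> xy w; split; first exact: sasaki_sle.
have y0 : y != 0 by apply: contraNneq xy => ->; rewrite dotv0r.
have yy0 : dot y y != 0 by rewrite dotv_eq0.
have xyy0 : dot x y / dot y y != 0 by rewrite mulf_neq0 ?invr_eq0.
move=> [c ->]; apply/mem_sasakiP; exists ((c / (dot x y / dot y y)) *: x).
  by exists (c / (dot x y / dot y y)).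
rewrite projZ (@proj_unique _ _ _ x ((dot x y / dot y y) *: y)).
- by rewrite scalerA divfK.
- by exists (dot x y / dot y y).
- by move=> _ [c' ->]; rewrite dotvZr dotvBl dotvZl mulfVK // subrr mulr0.
Qed.

Lemma sasaki_mem_span1 (S : H) (x : vec) :
  mem S x -> Defs.seq_sub (sasaki S (span1 x)) (span1 x).
Proof.
move=> Sx w; split; first exact: sasaki_sle.
move=> [c ->]; apply/mem_sasakiP; exists (c *: x); first exact: mem_subZ.
by rewrite proj_id //; exists c.
Qed.

End Lines.

Section Realize.
Variables (R : realType) (d : nat) (N : structure R d).
Hypotheses (HN : model_of (@PQM R d) N) (d3 : (3 <= d)%N).
Local Notation vec := 'cV[R[i]]_d.
Local Notation dot := (@dotv R d).
Local Notation mem := (@mem_sub R d).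
Local Notation pi := (@i_pi R d N).
Local Notation support := (support HN d3).

Lemma support_pi_span1 (b : N) (x y : vec) :
  Defs.seq_sub (support b) (span1 x) -> dot x y != 0 ->
  Defs.seq_sub (support (pi (span1 y) b)) (span1 y).
Proof.
move=> bx xy; apply: seq_sub_trans (support_pi HN d3 _ _) _.
exact: seq_sub_trans (sasaki_seq_sub _ bx) (sasaki_span1 xy).
Qed.

(* Starting from the support of a non-bot element, at most three projections
   onto lines that are pairwise non-orthogonal reach any given line. *)
Lemma exists_support_span1 (e0 : N) (v : vec) :
  exists b : N, Defs.seq_sub (support b) (span1 v).
Proof.
have [e eNbot] := exists_rel_nbot HN e0.
have [v0 ev0 v00] : exists2 v0, mem (support e) v0 & v0 != 0.
  apply: NNPP => noV; apply: eNbot; apply/(rel_supportP HN d3) => w ew.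
  by apply/eqP; apply: contraT => w0; case: noV; exists w.
have e1 : Defs.seq_sub (support (pi (span1 v0) e)) (span1 v0).
  exact: seq_sub_trans (support_pi HN d3 _ _) (sasaki_mem_span1 ev0).
have [->|v_0] := eqVneq v 0.
  exists (pi (span1 0) e).
  exact: seq_sub_trans (support_pi HN d3 _ _) (sasaki_mem_span1 (mem_sub0 _)).
have [v0v|v0v] := eqVneq (dot v0 v) 0; last first.
  by exists (pi (span1 v) (pi (span1 v0) e)); apply: support_pi_span1 e1 v0v.
have h1 : dot v0 (v + v0) != 0 by rewrite dotvDr v0v add0r dotv_eq0.
have h2 : dot (v + v0) v != 0 by rewrite dotvDl v0v addr0 dotv_eq0.
exists (pi (span1 v) (pi (span1 (v + v0)) (pi (span1 v0) e))).
exact: support_pi_span1 (support_pi_span1 e1 h1) h2.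
Qed.

End Realize.

Section Agreement.
Variables (R : realType) (d : nat) (M N : structure R d).
Local Notation H := (subspace R d).

Definition agree_on (L : seq (term R d * H)) (a : M) (b : N) : Prop :=
  forall tp, List.In tp L ->
    (i_rel tp.2 (eval1 a tp.1) <-> i_rel tp.2 (eval1 b tp.1)).

Hypotheses (HM : model_of (@PQM R d) M) (HN : model_of (@PQM R d) N).
Hypothesis d3 : (3 <= d)%N.
Local Notation mem := (@mem_sub R d).

(* Choose v in the support of a outside the preimages of all atoms false at a;
   an element of N whose support is the line of v then satisfies exactly the
   same atoms. *)
Lemma exists_agree_on (e0 : N) (a : M) (L : seq (term R d * H)) :
  exists b : N, agree_on L a b.
Proof.
set S := support HM d3 a.
have SK tp : List.In tp L -> ~ sle (term_sub tp.1 S) tp.2 ->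
    exists2 u, mem S u & ~ mem (term_preim tp.1 tp.2) u.
  move=> _ nle; apply: NNPP => noU; apply: nle => _ /mem_term_subP [u Su ->].
  by apply: NNPP => nu; apply: noU; exists u.
have [v Sv vK] := avoid_subspaces SK.
have [b bv] := exists_support_span1 HN d3 e0 v.
exists b => -[t p] tpL /=.
rewrite (rel_eval1P HM d3) (rel_eval1P HN d3); split=> tp.
  apply: sle_trans (term_sub_mono (seq_sub_sle bv)) _.
  by apply: sle_trans tp; apply: term_sub_mono => _ [c ->]; apply: mem_subZ.
apply: NNPP => nle; apply: (vK (t, p) tpL nle); apply: tp.
by apply: mem_term_sub; apply/bv; exists 1; rewrite scale1r.
Qed.

End Agreement.

Section Transfer.
Variables (R : realType) (d : nat) (M N : structure R d).
Local Notation H := (subspace R d).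
Local Notation term := (term R d).
Local Notation formula := (formula R d).

Fixpoint atoms (f : formula) : seq (term * H) :=
  match f with
  | FRel p t => [:: (t, p)]
  | FFalse => [::]
  | FNot g | FAll _ g | FEx _ g => atoms g
  | FAnd g h | FOr g h | FImp g h => atoms g ++ atoms h
  end.

Lemma term_var_ex (t : term) : exists n, term_var n t.
Proof. by elim: t => [n|U t IH|q t IH] //=; exists n. Qed.

Lemma eval_term_var (K : structure R d) (rho : nat -> K) (t : term) n :
  term_var n t -> eval rho t = eval1 (rho n) t.
Proof. by elim: t => [m|U t IH|q t IH] /= => [->|/IH ->|/IH ->]. Qed.

Hypothesis MN : forall (a : M) L, exists b : N, agree_on L a b.
Hypothesis NM : forall (b : N) L, exists a : M, agree_on L a b.

(* Every term has a single variable, so the atoms of f only see the values of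
   the assignments at the free variables of f. *)
Definition agree_at (f : formula) (rho : nat -> M) (sigma : nat -> N) : Prop :=
  forall n, free_in n f -> forall t p, List.In (t, p) (atoms f) -> term_var n t ->
    (i_rel p (eval rho t) <-> i_rel p (eval sigma t)).

Lemma agree_at_app (f g h : formula) rho sigma : agree_at f rho sigma ->
  (forall n, free_in n g \/ free_in n h -> free_in n f) ->
  atoms f = atoms g ++ atoms h ->
  agree_at g rho sigma /\ agree_at h rho sigma.
Proof.
move=> fa fr af; split=> n n_gh t p tp_gh; apply: fa; rewrite ?af;
  by [apply: fr; (left + right) | apply: List.in_or_app; (left + right)].
Qed.

Lemma agree_at_upd m (g : formula) rho sigma (a : M) (b : N) :
  agree_at (FAll m g) rho sigma -> agree_on (atoms g) a b ->
  agree_at g (upd rho m a) (upd sigma m b).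
Proof.
move=> ag ab n gn t p tpg tn; rewrite !(eval_term_var _ tn) /upd.
case: eqP => [_|nm]; first exact: (ab (t, p) tpg).
rewrite -!(eval_term_var _ tn); apply: (ag n _ t p tpg tn).
by split=> // mn; apply: nm.
Qed.

Lemma sat_transfer (f : formula) rho sigma :
  agree_at f rho sigma -> (sat rho f <-> sat sigma f).
Proof.
elim: f rho sigma => [p t| |g IH|g IHg h IHh|g IHg h IHh|g IHg h IHh|m g IH|m g IH]
  rho sigma fa /=.
4-6: have [ga ha] := agree_at_app fa (fun _ x => x) erefl;
     by rewrite (IHg _ _ ga) (IHh _ _ ha).
- by have [n tn] := term_var_ex t; apply: (fa n tn t p) => //=; left.
- by [].
- by rewrite (IH _ _ fa).
- split=> all_g x.
    by have [a ax] := NM x (atoms g); apply/(IH _ _ (agree_at_upd fa ax)).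
  by have [b xb] := MN x (atoms g); apply/(IH _ _ (agree_at_upd fa xb)).
- split=> -[x gx].
    by have [b xb] := MN x (atoms g); exists b; apply/(IH _ _ (agree_at_upd fa xb)).
  by have [a ax] := NM x (atoms g); exists a; apply/(IH _ _ (agree_at_upd fa ax)).
Qed.

End Transfer.

Section VectorModel.
Variables (R : realType) (d : nat).
Local Notation vec := 'cV[R[i]]_d.

Definition vmodel : structure R d :=
  @Structure R d vec (fun U v => mat_of U *m v) (@proj R d) (@mem_sub R d).

Lemma vmodel_PQM : (0 < d)%N -> model_of (@PQM R d) vmodel.
Proof.
move=> d0 f []; rewrite /models /= /upd /=.
- move=> rho; exists (const_mx 1) => /matrixP /(_ (Ordinal d0) 0).
  by rewrite !mxE => /eqP; rewrite oner_eq0.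
- by [].
- by move=> p q pq rho a; apply: pq.
- by move=> p q _ rho a [].
- by move=> p q rho a pa; apply/mem_sasakiP; exists a.
- move=> p q pq rho a qpa; rewrite -(subrK (proj q a) a) projD qpa addr0.
  by apply: proj_ortho => w /pq; apply: mem_ortho_proj.
- by move=> q rho a qa; have := @mem_ortho_proj _ _ q a; rewrite qa subr0.
- by move=> p U rho a pa; exists a.
- move=> p U rho a pa; exists (mat_of U *m a) => //.
  by case: U pa => /= U /eqP /mulmx1_unit [Uu _] _; rewrite mulmxA mulVmx ?mul1mx.
Qed.

End VectorModel.

Theorem mainTheorem4 (R : realType) (d : nat) :
  (3 <= d)%N -> complete_theory (@PQM R d).
Proof.
move=> d3; split; first by exists (vmodel R d); apply: vmodel_PQM; apply: leq_trans d3.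
move=> s s_sentence; have [|not_s] := classic (entails (@PQM R d) s); first by left.
right => N HN sigma /= s_sigma; apply: not_s => M HM rho.
have MN a L := exists_agree_on HM HN d3 (sigma 0%N) a L.
have NM (b : N) L : exists a : M, agree_on L a b.
  by have [a ba] := exists_agree_on HN HM d3 (rho 0%N) b L; exists a => tp /ba; apply: iff_sym.
have fa : agree_at s rho sigma by move=> n /s_sentence.
exact/(sat_transfer MN NM fa).
Qed.
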